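(* Let $X$ be a second countable locally compact Hausdorff space and $T\colon X\to X$ a continuous, locally injective map. Then the saturated critical set $G_\Lambda$ is meagre if and only if the critical point set $C=\{x\in X: T\text{ is not open at }x\}$ is meagre.
   Context: $T$ is open at $x$ if for every neighbourhood $U$ of $x$, $T(x)\in\mathrm{int}(T(U))$. The transfer operator with weight $1$ is $\Lambda(f)(x)=\sum_{y\in T^{-1}(x)}f(y)$ for $f\in C_c(X)$. The critical value set is $C_\Lambda=\{x\in X:\Lambda(f)\text{ is not continuous at }x\text{ for some }f\in C_c(X)\}$, the post-critical set is $P_\Lambda=\bigcup_{n\ge0}T^n(C_\Lambda)$, and the saturated critical set is $G_\Lambda=\bigcup_{k\ge0}T^{-k}(P_\Lambda)$ ($T$ is called sparsely critically saturated when $G_\Lambda$ is meagre). A set is meagre if it is a countable union of sets whose closures have empty interior. *)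

From HB Require Import structures.
From mathcomp Require Import all_boot all_order all_algebra.
From mathcomp Require Import all_classical all_reals all_analysis.
Set Implicit Arguments. Unset Strict Implicit. Unset Printing Implicit Defensive.
Import Order.TTheory GRing.Theory Num.Theory numFieldNormedType.Exports.
Local Open Scope classical_set_scope.
Local Open Scope ring_scope.

Section Defs.
Context {X : topologicalType} {R : realType}.

Definition Cc (f : X -> R) : Prop :=
  continuous f /\ compact (closure [set x | f x != 0]).

(* transfer operator with weight 1: Lambda(f)(x) = sum_{y in T^{-1}(x)} f y *)
Definition transfer (T : X -> X) (f : X -> R) (x : X) : R :=
  \sum_(y \in T @^-1` [set x]) f y.

Definition crit_values (T : X -> X) : set X :=
  [set x | exists f : X -> R, Cc f /\ ~ {for x, continuous (transfer T f)}].

Definition post_crit (T : X -> X) : set X :=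
  \bigcup_(n in [set: nat]) ((iter n T) @` crit_values T).

Definition sat_crit (T : X -> X) : set X :=
  \bigcup_(k in [set: nat]) ((iter k T) @^-1` post_crit T).
End Defs.

Section Top.
Context {X : topologicalType}.

Definition open_at (T : X -> X) (x : X) : Prop :=
  forall U, nbhs x U -> interior (T @` U) (T x).

Definition crit_points (T : X -> X) : set X := [set x | ~ open_at T x].

Definition locally_injective (T : X -> X) : Prop :=
  forall x : X, exists U, nbhs x U /\
    (forall y z, U y -> U z -> T y = T z -> y = z).

Definition meagre (A : set X) : Prop :=
  exists F : nat -> set X,
    (forall n, interior (closure (F n)) = set0) /\ A = \bigcup_(n in [set: nat]) F n.
End Top.

From HB Require Import structures.
From mathcomp Require Import all_boot all_order all_algebra.
From mathcomp Require Import all_classical all_reals all_analysis.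
Set Implicit Arguments. Unset Strict Implicit. Unset Printing Implicit Defensive.
Import Order.TTheory GRing.Theory Num.Theory numFieldNormedType.Exports.
Local Open Scope classical_set_scope.

(* Meagreness is transported by T once T is open on a dense set: preimages of
   nowhere dense sets are then nowhere dense, and so are images of nowhere dense
   subsets of an open set on which T is injective; second countability gives
   countably many such sets covering X.  If C is meagre, T is open on the dense
   set X \ C (Baire), and a value y with no critical preimage is not a critical
   value: near y the finitely many preimages of y in the support of f move
   continuously along local inverses of T, so the transfer operator is locally
   a finite sum of continuous functions.  Hence C_Lambda is contained in T(C)
   and G_Lambda is meagre.  Conversely T(C) is contained in C_Lambda, by
   applying the transfer operator to a bump function at a critical point, so
   C lies in T^-1(P_Lambda), which is part of G_Lambda. *)

Section Meagre.
Context {X : topologicalType}.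

Definition nowhere_dense (A : set X) := interior (closure A) = set0.

Lemma nowhere_dense_set0 : nowhere_dense set0.
Proof. by rewrite /nowhere_dense closure0 interior0. Qed.

Lemma sub_meagre (A B : set X) : A `<=` B -> meagre B -> meagre A.
Proof.
move=> AB [F [nF BF]]; exists (fun n => F n `&` A); split.
  move=> n; rewrite -subset0 -(nF n).
  by apply: interiorS; apply: closureS; exact: subIsetl.
apply/seteqP; split=> [x Ax|x [n _ []]//].
by have := AB _ Ax; rewrite BF => -[n _ Fx]; exists n.
Qed.

Lemma nowhere_dense_meagre (A : set X) : nowhere_dense A -> meagre A.
Proof.
move=> nA; exists (fun n => if n is 0 then A else set0); split.
  by case=> [|n] //; exact: nowhere_dense_set0.
by apply/seteqP; split=> [x Ax|x [[|n] _ //]]; exists 0.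
Qed.

Lemma bigcup_meagre (A : nat -> set X) :
  (forall n, meagre (A n)) -> meagre (\bigcup_(n in [set: nat]) A n).
Proof.
move=> /choice[F /all_and2[nF AF]].
pose G k := if choice.unpickle k is Some (n, m) then F n m else set0.
exists G; split.
  move=> k; rewrite /G; case: choice.unpickle => [[n m]|]; first exact: nF.
  exact: nowhere_dense_set0.
apply/seteqP; split=> x [n _].
  rewrite AF => -[m _ Fx].
  by exists (choice.pickle (n, m)) => //; rewrite /G choice.pickleK.
rewrite /G; case: choice.unpickle => [[k m]|//] Fx.
by exists k => //; rewrite AF; exists m.
Qed.

End Meagre.

Section LocallyCompactBaire.
Context {X : topologicalType}.
Hypotheses (lcX : locally_compact [set: X]) (hsX : hausdorff_space X).

Lemma compact_closed_nbhs (x : X) : exists K, [/\ nbhs x K, compact K & closed K].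
Proof.
have [K xK [cK clK]] := lcX (I : [set: X] x); exists K; split=> //.
by move: xK; rewrite /within /=; apply: filterS => y; apply.
Qed.

Lemma open_nbhs_precompact_sub (V : set X) (x : X) : open V -> V x ->
  exists W, [/\ open W, W x, closure W `<=` V & compact (closure W)].
Proof.
move=> oV Vx; have [K [xK cK clK]] := compact_closed_nbhs x.
have [B xB BV] := compact_regular hsX cK xK (open_nbhs_nbhs (conj oV Vx)).
exists (interior (B `&` K)); split.
- exact: open_interior.
- exact: filterI.
- by move=> y /(closureS (@interior_subset _ _)) /closureI[/BV].
- apply: (subclosed_compact (@closed_closure _ _) cK).
  move=> y /(closureS (@interior_subset _ _)) /closureI[_].
  by rewrite -(closure_id K).1.
Qed.

Lemma nowhere_dense_avoid (N U : set X) : nowhere_dense N -> open U -> U !=set0 ->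
  exists W, [/\ open W, W !=set0, closure W `<=` U `\` closure N
                & compact (closure W)].
Proof.
move=> nN oU [u Uu].
have [x [Ux Nx]] : exists x, U x /\ ~ closure N x.
  apply: contrapT => /forallNP UN.
  suff : interior (closure N) u by rewrite nN.
  apply: filterS (open_nbhs_nbhs (conj oU Uu)) => y Uy.
  by have /not_andP[//|/contrapT] := UN y.
have oUN : open (U `\` closure N).
  by apply: openI => //; exact/closed_openC/closed_closure.
have [W [oW Wx WUN cW]] := open_nbhs_precompact_sub oUN (conj Ux Nx).
by exists W; split=> //; exists x.
Qed.

(* Baire: shrink the open set along the nowhere dense pieces to a nested
   sequence of precompact open sets; a cluster point of it avoids them all. *)
Lemma meagre_denseC (A : set X) : meagre A -> dense (~` A).
Proof.
move=> [F [nF ->]] O O0 oO.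
have avoid (nU : nat * set X) : exists W, open nU.2 -> nU.2 !=set0 ->
    [/\ open W, W !=set0, closure W `<=` nU.2 `\` closure (F nU.1)
       & compact (closure W)].
  case: nU => n U; have [[oU U0]|nU] := pselect (open U /\ U !=set0).
    by have [W ?] := nowhere_dense_avoid (nF n) oU U0; exists W.
  by exists U => oU U0; exfalso; apply: nU.
have [step stepP] := choice avoid.
pose W := fix W n := if n is m.+1 then step (n, W m) else step (0, O).
have oW n : open (W n) /\ W n !=set0.
  elim: n => [|n [oWn Wn0]]; first by have [] := stepP (0, O) oO O0.
  by have [] := stepP (n.+1, W n) oWn Wn0.
have Wstep n : closure (W n) `<=` (if n is m.+1 then W m else O) `\` closure (F n)
    /\ compact (closure (W n)).
  case: n => [|n]; first by have [] := stepP (0, O) oO O0.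
  by have [oWn Wn0] := oW n; have [] := stepP (n.+1, W n) oWn Wn0.
have Wdec n : W n.+1 `<=` W n.
  by move=> y /subset_closure /(Wstep n.+1).1[].
have Wmon := @homo_leq _ W (fun U V => V `<=` U) (@subset_refl _)
  (fun _ _ _ UV VW => subset_trans VW UV) Wdec.
have FW : Filter (filter_from [set: nat] W).
  apply: filter_from_filter; first by exists 0.
  move=> i j _ _; exists (maxn i j) => // y Wy.
  by split; apply: Wmon Wy; rewrite ?leq_maxl ?leq_maxr.
have PW : ProperFilter (filter_from [set: nat] W).
  exact: filter_from_proper (fun i _ => (oW i).2).
have [x [_]] := (Wstep 0).2 _ PW (ex_intro2 _ _ 0 I (@subset_closure _ _)).
rewrite clusterE => Wx.
have {}Wx n : closure (W n) x by apply: Wx; exists n.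
exists x; split; first by have [] := (Wstep 0).1 _ (Wx 0).
move=> [n _ Fx]; have [_] := (Wstep n).1 _ (Wx n).
by apply; exact: subset_closure.
Qed.

End LocallyCompactBaire.

Definition injective_on {X Y : Type} (f : X -> Y) (V : set X) :=
  forall y z, V y -> V z -> f y = f z -> y = z.

Definition injective_open_cover {X : topologicalType} (T : X -> X)
    (V : nat -> set X) :=
  (forall k, open (V k) /\ injective_on T (V k)) /\ forall x, exists k, V k x.

Lemma closure_preimage_sub {X Y : topologicalType} (f : X -> Y) (N : set Y) :
  continuous f -> closure (f @^-1` N) `<=` f @^-1` closure N.
Proof.
move=> cf x fNx B /cf /fNx[y [Ny By]].
by exists (f y).
Qed.

Section OpenOnDenseSet.
Context {X : topologicalType} (T : X -> X).
Hypotheses (cT : continuous T) (dT : dense [set x | open_at T x]).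

Lemma nowhere_dense_preimage (N : set X) :
  nowhere_dense N -> nowhere_dense (T @^-1` N).
Proof.
move=> nN; rewrite /nowhere_dense -subset0 => x Ux.
set U := interior (closure (T @^-1` N)).
have [a [Ua Ta]] := dT (ex_intro _ x Ux) (@open_interior _ _).
suff : interior (closure N) (T a) by rewrite nN.
apply: filterS (Ta U (open_nbhs_nbhs (conj (@open_interior _ _) Ua))).
move=> _ [u Uu <-].
exact (closure_preimage_sub cT (interior_subset Uu)).
Qed.

(* If T w lies in the interior of the closure of T(N ∩ V), then so does T a for
   points a near w where T is open; T maps small neighbourhoods of a onto
   neighbourhoods of T a, and injectivity on V pulls their hits back into N,
   so w is in the closure of N. *)
Lemma nowhere_dense_image (N V : set X) : open V -> injective_on T V ->
  nowhere_dense N -> nowhere_dense (T @` (N `&` V)).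
Proof.
move=> oV iV nN; rewrite /nowhere_dense -subset0 => y Oy.
set O := interior (closure (T @` (N `&` V))).
have [_ [[n [Nn Vn] <-] On]] : T @` (N `&` V) `&` O !=set0.
  by apply: (interior_subset Oy); exact: nbhs_interior Oy.
have oW : open (V `&` T @^-1` O).
  apply: openI => //; apply: open_comp; [move=> z _; exact: cT | exact: open_interior].
have WN : V `&` T @^-1` O `<=` closure N.
  move=> w Ww B wB.
  set W' := interior (B `&` (V `&` T @^-1` O)).
  have W'w : W' w by apply: filterI => //; exact: open_nbhs_nbhs.
  have [a [W'a Ta]] := dT (ex_intro _ w W'w) (@open_interior _ _).
  have /interior_subset[_ [Va Oa]] := W'a.
  have [_ [[m [Nm Vm] <-] [w' W'w' Tw'm]]] := interior_subset Oa _
    (Ta W' (open_nbhs_nbhs (conj (@open_interior _ _) W'a))).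
  have [Bw' [Vw' _]] := interior_subset W'w'.
  by exists m; split=> //; rewrite -(iV _ _ Vw' Vm Tw'm).
suff : interior (closure N) n by rewrite nN.
by apply: filterS WN _; apply: open_nbhs_nbhs; split=> //; split.
Qed.

Lemma meagre_preimage (N : set X) : meagre N -> meagre (T @^-1` N).
Proof.
move=> [F [nF ->]]; rewrite preimage_bigcup.
by apply: bigcup_meagre => n; exact/nowhere_dense_meagre/nowhere_dense_preimage.
Qed.

Lemma meagre_image (V : nat -> set X) : injective_open_cover T V ->
  forall N, meagre N -> meagre (T @` N).
Proof.
move=> [oiV cV] _ [F [nF ->]].
apply: (@sub_meagre _ _ (\bigcup_(n in [set: nat])
   \bigcup_(k in [set: nat]) T @` (F n `&` V k))).
  move=> _ [x [n _ Fx] <-]; have [k Vx] := cV x.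
  by exists n => //; exists k => //; exists x.
apply: bigcup_meagre => n; apply: bigcup_meagre => k.
have [oV iV] := oiV k.
exact/nowhere_dense_meagre/nowhere_dense_image.
Qed.

Lemma meagre_iter_preimage n (N : set X) : meagre N -> meagre (iter n T @^-1` N).
Proof.
elim: n N => [|n IH] N mN //.
exact: IH (meagre_preimage mN).
Qed.

Lemma meagre_iter_image (V : nat -> set X) : injective_open_cover T V ->
  forall n N, meagre N -> meagre (iter n T @` N).
Proof.
move=> coverV; elim=> [|n IH] N mN; first by rewrite image_id.
have -> : iter n.+1 T @` N = T @` (iter n T @` N) by rewrite image_comp.
exact: meagre_image coverV _ (IH N mN).
Qed.

End OpenOnDenseSet.

Lemma locally_injective_countable_cover {X : topologicalType} (T : X -> X) :
  @second_countable X -> locally_injective T ->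
  exists V : nat -> set X, injective_open_cover T V.
Proof.
move=> [B cB [oB bB]] liT; have [f finj] := countable_injP _ cB.
pose V k := \bigcup_(b in [set b | B b /\ f b = k /\ injective_on T b]) b.
exists V; split.
  move=> k; split; first by apply: bigcup_open => b [Bb _]; exact: oB.
  move=> y z [b1 [B1 [f1 i1]] y1] [b2 [B2 [f2 i2]] z2].
  have e : b1 = b2 by apply: finj; rewrite ?inE // f1 f2.
  by subst b2; exact: i1.
move=> x; have [U [xU iU]] := liT x.
have [b [Bb bx] bU] := bB x U xU.
by exists (f b), b => //; split=> //; split=> // y z /bU yU /bU zU; exact: iU.
Qed.

Lemma compact_discrete_finite {X : topologicalType} (A : set X) : compact A ->
  (forall p, A p -> exists U, nbhs p U /\ U `&` A `<=` [set p]) -> finite_set A.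
Proof.
move=> cA dA; apply: contrapT => iA.
pose G (S : set X) := finite_set (A `\` S).
have FG : Filter G.
  constructor; first by rewrite /G setDT.
    move=> S1 S2 h1 h2; apply: (@sub_finite_set _ _ (A `\` S1 `|` A `\` S2)).
      by move=> x [Ax /not_andP[]]; [left|right].
    by rewrite finite_setU.
  by move=> S1 S2 S12; apply: sub_finite_set => x [Ax nS2]; split=> // /S12.
have PG : ProperFilter G by constructor=> // h; apply: iA; rewrite -(setD0 A).
have GA : G A by rewrite /G setDv.
have [p [Ap pG]] := cA G PG GA.
have [U [pU UA]] := dA p Ap.
have Gp : G (A `\` [set p]).
  apply: sub_finite_set (finite_set1 p) => x [Ax].
  by move=> /not_andP[//|/contrapT].
have [q [[Aq qp] Uq]] := pG _ _ Gp pU.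
by apply: qp; exact: UA.
Qed.

Lemma filter_finite_forall {T : Type} {I : choiceType} (F : set_system T)
    {FF : Filter F} (P : set I) (Q : I -> set T) : finite_set P ->
  (forall i, P i -> F (Q i)) -> F [set z | forall i, P i -> Q i z].
Proof.
move=> fP FQ; have := @filter_bigI T I (fset_set P) Q F FF.
rewrite fset_setK // => /(_ _)/filterS; apply=> [z zQ i Pi|i]; first exact: zQ.
by rewrite in_fset_set // inE; exact: FQ.
Qed.

Section TransferContinuity.
Local Open Scope ring_scope.
Context {R : realType} {X : topologicalType} (T : X -> X).
Hypotheses (hsX : hausdorff_space X) (liT : locally_injective T) (cT : continuous T).
Variables (y : X) (f : X -> R).
Hypotheses (Ty_open : forall x, T x = y -> open_at T x)
  (f_cont : continuous f) (f_supp : compact (closure [set x | f x != 0])).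

Let K := closure [set x | f x != 0].
Let P := K `&` T @^-1` [set y].

Lemma support_fibre_finite : finite_set P.
Proof.
have clTy : closed (T @^-1` [set y]).
  apply: preimage_closed => [z _|]; first exact: cT.
  exact: accessible_closed_set1 (hausdorff_accessible hsX) y.
apply: compact_discrete_finite; first exact: compact_closedI.
move=> p [_ Tp]; have [U [pU iU]] := liT p; exists U; split=> // q [Uq [_ Tq]].
by apply: iU => //; [exact: nbhs_singleton | rewrite Tq Tp].
Qed.

Let U p := projT1 (cid (liT p)).
Let U_spec p : nbhs p (U p) /\ injective_on T (U p) := projT2 (cid (liT p)).

(* the branch of T^-1 through p on T(U p), with junk value p elsewhere *)
Let branch z p := xget p [set w | U p w /\ T w = z].

Let branch_spec z p : (T @` U p) z -> U p (branch z p) /\ T (branch z p) = z.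
Proof.
by case=> w Uw Twz; apply: (@xgetPex X p [set w | U p w /\ T w = z]); exists w.
Qed.

Lemma branch_cvg p : P p -> (branch^~ p) @ y --> p.
Proof.
move=> [_ Tp] V /= pV.
have pVU : nbhs p (V `&` U p) by apply: filterI => //; exact: (U_spec p).1.
have := Ty_open Tp pVU; rewrite Tp; apply: filterS => z [w [Vw Uw] Twz].
have [Ug Tg] := branch_spec (ex_intro2 _ _ w Uw Twz).
by rewrite /= ((U_spec p).2 _ _ Ug Uw) // Tg Twz.
Qed.

Lemma near_branches_defined : \forall z \near y, forall p, P p -> (T @` U p) z.
Proof.
apply: filter_finite_forall; first exact: support_fibre_finite.
by move=> p [_ Tp]; have := Ty_open Tp (U_spec p).1; rewrite Tp.
Qed.

Lemma near_branches_injective : \forall z \near y,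
  forall pq, (P `*` P) pq -> pq.1 != pq.2 -> branch z pq.1 != branch z pq.2.
Proof.
apply: filter_finite_forall.
  exact: finite_setX support_fibre_finite support_fibre_finite.
move=> [p q] [/= Pp Pq].
have [->|pq] := eqVneq p q; first by apply: nearW => z; rewrite eqxx.
have [[A B] [/= Ap Bq] [oA oB /eqP AB0]] := (eq_ind _ id hsX _ open_hausdorff) p q pq.
have pA : nbhs p A by apply: open_nbhs_nbhs; split=> //; exact: set_mem.
have qB : nbhs q B by apply: open_nbhs_nbhs; split=> //; exact: set_mem.
have yA : nbhs y [set z | A (branch z p)] := branch_cvg Pp pA.
have yB : nbhs y [set z | B (branch z q)] := branch_cvg Pq qB.
apply: filterS (filterI yA yB) => z [/= zA zB] _.
apply/eqP => e; suff : (A `&` B) (branch z q) by rewrite AB0.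
by split=> //; rewrite -e.
Qed.

Let K' := K `&` ~` (\bigcup_(p in P) interior (U p)).

(* T(K') is compact and misses y, so near y every preimage in the support lies
   in the domain of one of the branches. *)
Lemma near_notin_image_uncovered : \forall z \near y, ~ (T @` K') z.
Proof.
have clK' : closed K'.
  apply: closedI; first exact: closed_closure.
  by rewrite closedC; apply: bigcup_open => p _; exact: open_interior.
have cTK' : compact (T @` K').
  apply: continuous_compact; first exact: continuous_subspaceT.
  by apply: subclosed_compact clK' f_supp _; exact: subIsetl.
apply: open_nbhs_nbhs; split; first by apply: closed_openC; exact: compact_closed.
move=> [k [Kk nk] Tky]; apply: nk; exists k; first by split.
exact: (U_spec k).1.
Qed.

Lemma near_branch_sum_transfer :
  \forall z \near y, \sum_(p \in P) f (branch z p) = transfer T f z.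
Proof.
apply: filterS (filterI near_branches_defined
  (filterI near_notin_image_uncovered near_branches_injective)) => z [zU [zK' zinj]].
rewrite /transfer -(fsbig_widen (branch z @` P) (T @^-1` [set z]) f).
- rewrite fsbig_image // => a b /set_mem Pa /set_mem Pb e.
  apply: contrapT => /eqP ab.
  by have := zinj (a, b) (conj Pa Pb) ab; rewrite /= e eqxx.
- by move=> _ [p Pp <-]; exact: (branch_spec (zU p Pp)).2.
move=> w [/= Twz nw]; apply: contrapT => /eqP fw.
have [p Pp Uw] : (\bigcup_(p in P) interior (U p)) w.
  apply: contrapT => nU; apply: zK'; exists w => //.
  by split=> //; exact: subset_closure.
apply: nw; exists p => //; have [Ug Tg] := branch_spec (zU p Pp).
by apply: (U_spec p).2 => //; [exact: interior_subset | rewrite Tg Twz].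
Qed.

Lemma transfer_fibre_sum : transfer T f y = \sum_(p \in P) f p.
Proof.
rewrite /transfer -(fsbig_widen P (T @^-1` [set y]) f) //; first by move=> p [].
move=> w [/= Twy Pw]; apply: contrapT => /eqP fw.
by apply: Pw; split=> //; exact: subset_closure.
Qed.

Lemma transfer_continuous_at : {for y, continuous (transfer T f)}.
Proof.
have fP := support_fibre_finite.
suff : (fun z => \sum_(p \in P) f (branch z p)) @ y --> \sum_(p \in P) f p.
  rewrite -transfer_fibre_sum => h.
  by apply: cvg_trans h; apply: near_eq_cvg; exact: near_branch_sum_transfer.
under eq_fun do rewrite fsbig_finite // big_seq.
rewrite fsbig_finite // big_seq; apply: cvg_big; first exact: add_continuous.
move=> p; rewrite in_fset_set // => /set_mem Pp.
apply: cvg_comp; [exact: branch_cvg | exact: f_cont].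
Qed.

End TransferContinuity.

Section Bump.
Local Open Scope ring_scope.
Context {R : realType} {X : topologicalType}.
Hypotheses (lcX : locally_compact [set: X]) (hsX : hausdorff_space X).

Lemma Cc_bump (V : set X) (x : X) : open V -> V x ->
  exists f : X -> R, [/\ Cc f, f x = 1 & forall y, f y != 0 -> V y].
Proof.
move=> oV Vx; have [K [xK cK clK]] := compact_closed_nbhs lcX x.
pose W := interior (V `&` K).
have Wx : W x by apply: filterI => //; exact: open_nbhs_nbhs.
have crX := @locally_compact_completely_regular X R lcX hsX.
have sep := crX x (~` W) (open_closedC (@open_interior _ _)) (fun nWx => nWx Wx).
pose g := @Urysohn X R [set x] (~` W).
have g0 : g x = 0 by apply: (Urysohn_sub0 sep); exists x.
have g1 y : ~ W y -> g y = 1 by move=> nW; apply: (Urysohn_sub1 sep); exists y.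
have fW y : 1 - g y != 0 -> W y.
  by apply: contraPP => /g1 ->; rewrite subrr eqxx.
exists (fun y => 1 - g y); split.
- split; first by move=> y; apply: cvgB; [exact: cvg_cst | exact: Urysohn_continuous].
  apply: subclosed_compact (@closed_closure _ _) cK _.
  move=> y /(closureS fW) /(closureS (@interior_subset _ _)) /closureI[_].
  by rewrite -(closure_id K).1.
- by rewrite g0 subr0.
- by move=> y /fW /interior_subset[].
Qed.

End Bump.

Section CriticalValues.
Local Open Scope ring_scope.
Context {R : realType} {X : topologicalType} (T : X -> X).
Hypotheses (lcX : locally_compact [set: X]) (hsX : hausdorff_space X)
  (cT : continuous T) (liT : locally_injective T).

(* Test Lambda on a bump at x supported where T is injective and T(U0) is not a
   neighbourhood of T x: Lambda f is 1 at T x but vanishes off T(U0). *)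
Lemma crit_point_crit_value (x : X) :
  crit_points T x -> @crit_values X R T (T x).
Proof.
move=> Cx.
have [U0 [xU0 nTU0]] : exists U0, nbhs x U0 /\ ~ nbhs (T x) (T @` U0).
  apply: contrapT => /forallNP hU; apply: Cx => U xU.
  by have /not_andP[//|/contrapT] := hU U.
have [Ui [xUi iUi]] := liT x.
have xV : interior (U0 `&` Ui) x by exact: filterI.
have [f [fCc fx1 fV]] := @Cc_bump R _ lcX hsX _ _ (@open_interior _ _) xV.
exists f; split=> // Tfx.
have Tfx1 : transfer T f (T x) = 1.
  rewrite /transfer -(fsbig_widen [set x] (T @^-1` [set T x]) f) ?fsbig_set1 //.
    by move=> y ->.
  move=> y [/= Tyx nyx]; apply: contrapT => /eqP fy; apply: nyx.
  apply: iUi => //; last exact: nbhs_singleton.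
  by have /interior_subset[] := fV _ fy.
apply: nTU0.
have : nbhs (T x) (transfer T f @^-1` [set r : R | r != 0]).
  apply: Tfx; apply: open_nbhs_nbhs; split; first exact: open_neq.
  by rewrite /= Tfx1 oner_eq0.
apply: filterS => z /= /(@fsbigN1 _ _ _ unit X _ (fun _ => f) tt)[y /= Tyz fy].
by exists y => //; have /interior_subset[] := fV _ fy.
Qed.

Lemma crit_values_sub_image : @crit_values X R T `<=` T @` crit_points T.
Proof.
move=> y [f [[f_cont f_supp] nf]]; apply: contrapT => ny; apply: nf.
apply: transfer_continuous_at => // x Txy.
by apply: contrapT => nx; apply: ny; exists x.
Qed.

End CriticalValues.

Theorem corollary4p12 (R : realType) (X : topologicalType) (T : X -> X) :
  @second_countable X -> locally_compact [set: X] -> hausdorff_space X ->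
  continuous T -> locally_injective T ->
  (meagre (@sat_crit X R T) <-> meagre (crit_points T)).
Proof.
move=> scX lcX hsX cT liT; split.
  apply: sub_meagre => x Cx; exists 1 => //=; exists 0 => //.
  by exists (T x) => //; exact: crit_point_crit_value.
move=> mC; have dT : dense [set x | open_at T x].
  by rewrite -[S in dense S]setCK; exact: meagre_denseC.
have [V coverV] := locally_injective_countable_cover scX liT.
have mCV : meagre (@crit_values X R T).
  exact: sub_meagre (crit_values_sub_image hsX cT liT) (meagre_image cT dT coverV mC).
apply: bigcup_meagre => k; apply: (meagre_iter_preimage cT dT).
by apply: bigcup_meagre => n; exact: (meagre_iter_image cT dT coverV n mCV).
Qed.
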